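(* (a) There is an absolute constant $c>0$ such that for every event graph $G$ with $n$ nodes and every node $(v,X)$ of the unique sink component $\mathcal C$ of $\mathrm{dec}(G)$, a certifying walk for $(v,X)$ of minimum length has length at most $c n^2$. Consequently, for any two nodes $(u,X),(v,Y)$ of $\mathcal C$ there is a directed walk in $\mathcal C$ from $(u,X)$ to $(v,Y)$ of length at most $c' n^2$ for an absolute constant $c'$, i.e., $\mathcal C$ has diameter $O(n^2)$. (b) Both bounds are tight: for every integer $m\ge 2$, let $P$ be the path with $n=2m+1$ vertices whose labels, in order along the path, are $\mathtt{i}m,\mathtt{i}(m-1),\dots,\mathtt{i}1,\mathtt{d}m,\mathtt{d}1,\mathtt{d}2,\dots,\mathtt{d}m$, let $v$ be its middle vertex (labeled $\mathtt{d}m$), and let $Y=\{2k+1 : k=0,\dots,\lfloor m/2\rfloor-1\}$. Then $(v,\emptyset)$ and $(v,Y)$ are nodes of the unique sink component of $\mathrm{dec}(P)$, every certifying walk for $(v,Y)$ has length $\Omega(n^2)$, and every directed walk in $\mathrm{dec}(P)$ from $(v,\emptyset)$ to $(v,Y)$ has length $\Omega(n^2)$.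
   Context: An event graph is a finite, connected, undirected graph $G=(V,E)$, with $n=|V|$, in which every node $v$ carries a label that is either $\mathtt{i}x_v$ (insertion of $x_v$) or $\mathtt{d}x_v$ (deletion of $x_v$), where $x_v$ is an element of a finite universe $\mathcal U$. Write $\mathcal U_{|V}=\{x_v : v\in V\}$. It is assumed that for each $x\in\mathcal U_{|V}$ at least one node is labeled $\mathtt{i}x$ and at least one node is labeled $\mathtt{d}x$. The decorated graph $\mathrm{dec}(G)$ is the directed graph with vertex set $V\times 2^{\mathcal U_{|V}}$ in which $((u,X),(v,Y))$ is an edge if and only if $\{u,v\}\in E$ and $Y=X\cup\{x_v\}$ when $v$ is labeled $\mathtt{i}x_v$, respectively $Y=X\setminus\{x_v\}$ when $v$ is labeled $\mathtt{d}x_v$. A sink component of $\mathrm{dec}(G)$ is a strongly connected component of $\mathrm{dec}(G)$ from which no edge leads to a different strongly connected component; $\mathrm{dec}(G)$ has exactly one sink component, denoted $\mathcal C$. A walk in a graph is a finite sequence of nodes in which each node is joined by an edge to its successor (nodes may repeat); it is closed if its first and last nodes coincide; its length is its number of nodes. Given $v\in V$ and $X\subseteq\mathcal U_{|V}$, a certifying walk for $(v,X)$ is a closed walk $W$ in $G$ that starts and ends at $v$, contains for every $x\in\mathcal U_{|V}$ at least one node labeled $\mathtt{i}x$ or $\mathtt{d}x$, and satisfies, for every $x\in\mathcal U_{|V}$: $x\in X$ if and only if the last node of $W$ whose label refers to $x$ is labeled $\mathtt{i}x$. (A node $(v,X)$ lies in $\mathcal C$ iff a certifying walk for it exists.) 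*)

From HB Require Import structures.
From mathcomp Require Import all_boot.
Set Implicit Arguments. Unset Strict Implicit. Unset Printing Implicit Defensive.

(* An event graph: vertex type V (finite), finite universe U,
   undirected simple graph given by e : rel V,
   lab v = true means v is labelled  i x_v,  false means  d x_v,
   elt v = x_v. *)

Definition univV (V U : finType) (elt : V -> U) : {set U} := [set elt v | v : V].

Definition event_graph (V U : finType) (e : rel V) (lab : V -> bool) (elt : V -> U)
  : Prop :=
  [/\ symmetric e, irreflexive e, (forall u v : V, connect e u v) &
      forall x, x \in univV elt ->
        (exists v, elt v = x /\ lab v) /\ (exists v, elt v = x /\ ~~ lab v)].

Definition dec_node (V U : finType) (elt : V -> U) (p : V * {set U}) : bool :=
  p.2 \subset univV elt.

Definition dec_edge (V U : finType) (e : rel V) (lab : V -> bool) (elt : V -> U)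
  : rel (V * {set U}) :=
  fun p q =>
    [&& dec_node elt p, dec_node elt q, e p.1 q.1 &
        q.2 == (if lab q.1 then elt q.1 |: p.2 else p.2 :\ elt q.1)].

(* A walk from x to y (length = number of nodes = size s). *)
Definition walk (T : eqType) (E : rel T) (x y : T) (s : seq T) : bool :=
  match s with
  | [::] => false
  | a :: t => [&& a == x, path E a t & last a t == y]
  end.

Definition scc (T : finType) (E : rel T) (p q : T) : bool :=
  connect E p q && connect E q p.

Definition in_sink (V U : finType) (e : rel V) (lab : V -> bool) (elt : V -> U)
  (p : V * {set U}) : Prop :=
  dec_node elt p /\
  forall a b, scc (dec_edge e lab elt) p a -> dec_edge e lab elt a b ->
              scc (dec_edge e lab elt) p b.

Definition last_ref (V U : finType) (elt : V -> U) (W : seq V) (x : U) : option V :=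
  ohead (rev [seq w <- W | elt w == x]).

Definition certifying (V U : finType) (e : rel V) (lab : V -> bool) (elt : V -> U)
  (v : V) (X : {set U}) (W : seq V) : Prop :=
  [/\ walk e v v W,
      (forall x, x \in univV elt -> has (fun w => elt w == x) W) &
      (forall x, x \in univV elt ->
         (x \in X <-> exists w, last_ref elt W x = Some w /\ lab w))].

(* The tightness example: path on 2m+1 vertices 0..2m, labels
   i m, i (m-1), ..., i 1, d m, d 1, d 2, ..., d m; universe 'I_(m+1)
   (elements 1..m used). *)
Definition pathP_edge (m : nat) : rel 'I_(2 * m).+1 :=
  fun i j => (i.+1 == j :> nat) || (j.+1 == i :> nat).

Definition pathP_lab (m : nat) (i : 'I_(2 * m).+1) : bool := i < m.

Definition pathP_elt (m : nat) (i : 'I_(2 * m).+1) : 'I_m.+1 :=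
  inord (if i < m then m - i else if i == m :> nat then m else i - m).

Definition pathP_mid (m : nat) : 'I_(2 * m).+1 := inord m.

Definition pathP_Y (m : nat) : {set 'I_m.+1} :=
  [set (inord (2 * k + 1) : 'I_m.+1) | k : 'I_(m./2)].

From HB Require Import structures.
From mathcomp Require Import all_boot zify.
Set Implicit Arguments. Unset Strict Implicit. Unset Printing Implicit Defensive.

(* Walking along W from a set Z inserts and deletes elements according to the
   labels; the result [run Z W] is decided by the last reference of W to each
   element ([runP]), and walks of dec(G) are exactly walks of G together with
   this replay ([dec_path_proj], [dec_trace]).

   A sink node (v, X) has a certificate: walk around all of G,
   then come back to (v, X) inside its component ([sink_cert_tail]).  Any
   walk shrinks, keeping its endpoints and last references, to at most n
   steps per element it refers to ([shorten_walk]), so certificates of length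
   n^2 exist.  A simple path to v followed by a certificate of (v, Y) leads in
   dec(G) from any node to (v, Y) ([reach_cert]), which bounds the diameter
   and shows that certified nodes lie in the sink ([cert_tail_sink]).

   Sweeping from the
   middle outwards certifies (mid, T) for every T of 1..m-1 ([sweep_cert]).
   In a certificate of (mid, Y) the last references to 1, ..., m-1 alternate
   sides at growing distances from the middle, forcing (m-1)^2 steps
   ([zigzag]); a walk of dec(P) from (mid, {}) to (mid, Y), preceded by a
   sweep deleting everything, projects to such a certificate. *)

Section Replay.
Variables (V U : finType) (lab : V -> bool) (elt : V -> U).

Definition upd (Z : {set U}) (w : V) : {set U} :=
  if lab w then elt w |: Z else Z :\ elt w.

Definition run (Z : {set U}) (t : seq V) : {set U} := foldl upd Z t.

Lemma last_ref_cons (w : V) (t : seq V) (x : U) :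
  last_ref elt (w :: t) x =
  if last_ref elt t x is Some y then Some y else if elt w == x then Some w else None.
Proof.
rewrite /last_ref /=; case: ifP => _; last by case: (rev _).
by rewrite rev_cons -cats1; case: (rev _).
Qed.

Lemma last_ref_cat (t1 t2 : seq V) (x : U) :
  last_ref elt (t1 ++ t2) x =
  if last_ref elt t2 x is Some y then Some y else last_ref elt t1 x.
Proof. by rewrite /last_ref filter_cat rev_cat; case: (rev _). Qed.

Lemma last_refP (t : seq V) (x : U) : (last_ref elt t x != None) = has (fun w => elt w == x) t.
Proof.
elim: t => [|w t IH] //=; rewrite last_ref_cons.
by case: (last_ref elt t x) IH => [y|] /= <-; rewrite ?orbT //; case: (elt w == x).
Qed.

Lemma last_ref_mem (t : seq V) (x : U) (w : V) : last_ref elt t x = Some w -> (w \in t) && (elt w == x).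
Proof.
elim: t w => [|u t IH] w //=; rewrite last_ref_cons.
case E: (last_ref elt t x) => [y|].
  by case=> <-; rewrite in_cons; case/andP: (IH _ E) => -> ->; rewrite orbT.
by case: ifP => // H [<-]; rewrite mem_head H.
Qed.

Lemma last_ref_suffix (t1 t2 : seq V) (x : U) :
  has (fun w => elt w == x) t2 -> last_ref elt (t1 ++ t2) x = last_ref elt t2 x.
Proof. by rewrite -last_refP last_ref_cat; case: (last_ref elt t2 x). Qed.

Lemma last_ref_cons_mem (a : V) (t : seq V) (x : U) : a \in t -> last_ref elt (a :: t) x = last_ref elt t x.
Proof.
move=> at_; rewrite last_ref_cons; case E: (last_ref elt t x) => [y|] //.
case: eqP => // ea; have : has (fun w => elt w == x) t by apply/hasP; exists a; rewrite ?ea.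
by rewrite -last_refP E.
Qed.

Lemma last_ref_last (a : V) (t : seq V) :
  t != [::] -> last_ref elt t (elt (last a t)) = Some (last a t).
Proof.
case/lastP: t => [|t w] // _; rewrite last_rcons -cats1 last_ref_cat.
by rewrite /last_ref /= eqxx.
Qed.

Lemma split_last_ref (t : seq V) (x : U) (u : V) :
  last_ref elt t x = Some u ->
  exists t1 t2, t = t1 ++ u :: t2 /\ ~~ has (fun w => elt w == x) t2.
Proof.
elim/last_ind: t => [|t w IH] //; rewrite -cats1 last_ref_cat.
case E: (last_ref elt [:: w] x) => [y|].
  by move: E; rewrite /last_ref /=; case: ifP => // H [<-] [<-]; exists t, [::].
move=> /IH [t1 [t2 [-> H]]]; exists t1, (rcons t2 w); split.
  by rewrite -catA /= cats1.
by move: E; rewrite /last_ref /=; case: ifP => // H' _; rewrite has_rcons H' H.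
Qed.

Lemma run_cat (Z : {set U}) (t1 t2 : seq V) : run Z (t1 ++ t2) = run (run Z t1) t2.
Proof. by rewrite /run foldl_cat. Qed.

Lemma runP (Z : {set U}) (t : seq V) (x : U) :
  (x \in run Z t) = if last_ref elt t x is Some w then lab w else x \in Z.
Proof.
elim/last_ind: t => [|t w IH] //; rewrite -cats1 run_cat last_ref_cat.
have -> : last_ref elt [:: w] x = if elt w == x then Some w else None.
  by rewrite /last_ref /=; case: (elt w == x).
rewrite /run /= -/(run Z t) /upd.
case H: (elt w == x); rewrite -?IH;
  by case: (lab w); rewrite ?in_setU1 ?in_setD1 eq_sym H.
Qed.

Lemma elt_univV (w : V) : elt w \in univV elt.
Proof. by apply/imsetP; exists w. Qed.

Lemma run_sub (Z : {set U}) (t : seq V) : Z \subset univV elt -> run Z t \subset univV elt.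
Proof.
elim: t Z => [|w t IH] Z //= HZ; apply: IH; rewrite /upd; case: (lab w).
  by rewrite subUset sub1set elt_univV.
exact: subset_trans (subD1set _ _) HZ.
Qed.

Definition covers (t : seq V) : Prop :=
  forall x, x \in univV elt -> has (fun w => elt w == x) t.

Definition decides (t : seq V) (X : {set U}) : Prop :=
  forall x, x \in univV elt -> (x \in X <-> exists w, last_ref elt t x = Some w /\ lab w).

Lemma decides_run (Z : {set U}) (t : seq V) : covers t -> decides t (run Z t).
Proof.
move=> cov x /cov; rewrite -last_refP runP.
by case: (last_ref elt t x) => [w|] // _; split => [|[_ [[<-]]]] //; exists w.
Qed.

Lemma run_decides (Z X : {set U}) (s t : seq V) :
  covers t -> decides t X -> X \subset univV elt -> Z \subset univV elt ->
  run Z (s ++ t) = X.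
Proof.
move=> cov decX XU ZU; apply/setP => x; case Ux: (x \in univV elt).
  rewrite runP last_ref_suffix ?cov //.
  have := cov x Ux; rewrite -last_refP.
  case E: (last_ref elt t x) => [w|] // _.
  apply/idP/idP => [lw|/(decX x Ux)[w1 []]]; last by rewrite E => -[<-].
  by apply/(decX x Ux); exists w.
have /subsetP runU := run_sub (s ++ t) ZU.
by apply/idP/idP => [/runU|/(subsetP XU)]; rewrite Ux.
Qed.

Lemma run_deletions (t : seq V) : all (fun w => ~~ lab w) t -> run set0 t = set0.
Proof.
elim: t => [|w t IH] //= /andP[lw /IH {2}<-]; congr run.
by apply/setP => x; rewrite /upd (negbTE lw) !inE andbF.
Qed.

End Replay.

Section DecoratedWalks.
Variables (V U : finType) (e : rel V) (lab : V -> bool) (elt : V -> U).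
Local Notation dec := (dec_edge e lab elt).

Fixpoint dec_trace (Z : {set U}) (t : seq V) : seq (V * {set U}) :=
  if t is w :: t' then (w, upd lab elt Z w) :: dec_trace (upd lab elt Z w) t' else [::].

Lemma dec_trace_path (a : V) (Z : {set U}) (t : seq V) :
  dec_node elt (a, Z) -> path e a t -> path dec (a, Z) (dec_trace Z t).
Proof.
elim: t a Z => [|w t IH] a Z //= Ha /andP[eaw pt].
have Hw : dec_node elt (w, upd lab elt Z w) := (@run_sub _ _ lab elt Z [:: w] Ha).
by rewrite IH // /dec_edge Ha Hw eaw eqxx.
Qed.

Lemma dec_trace_last (a : V) (Z : {set U}) (t : seq V) :
  last (a, Z) (dec_trace Z t) = (last a t, run lab elt Z t).
Proof. by elim: t a Z => [|w t IH] a Z //=; rewrite IH. Qed.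

Lemma size_dec_trace (Z : {set U}) (t : seq V) : size (dec_trace Z t) = size t.
Proof. by elim: t Z => [|w t IH] Z //=; rewrite IH. Qed.

Lemma dec_path_proj (a : V) (Z : {set U}) (s : seq (V * {set U})) :
  path dec (a, Z) s ->
  path e a (map fst s) /\ last (a, Z) s = (last a (map fst s), run lab elt Z (map fst s)).
Proof.
elim: s a Z => [|[w Z'] s IH] a Z //= /andP[/and4P[_ _ /= eaw /eqP ->] ps].
by have [-> ->] := IH _ _ ps; rewrite eaw.
Qed.

Lemma connect_trace (a : V) (Z : {set U}) (t : seq V) :
  dec_node elt (a, Z) -> path e a t -> connect dec (a, Z) (last a t, run lab elt Z t).
Proof.
move=> Ha pt; apply/connectP; exists (dec_trace Z t); first exact: dec_trace_path.
by rewrite dec_trace_last.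
Qed.

Lemma scc_trans (p q r : V * {set U}) : scc dec p q -> scc dec q r -> scc dec p r.
Proof.
by case/andP=> pq qp /andP[qr rq]; apply/andP; split; apply: connect_trans; eassumption.
Qed.

Lemma sink_scc (p q : V * {set U}) : in_sink e lab elt p -> connect dec p q -> scc dec p q.
Proof.
case=> _ Hs /connectP[s ps ->]; elim/last_ind: s ps => [|s b IH].
  by rewrite /scc connect0.
by rewrite rcons_path last_rcons => /andP[ps eb]; exact: Hs (IH ps) eb.
Qed.

Lemma sink_closed (p q : V * {set U}) :
  in_sink e lab elt p -> connect dec p q -> in_sink e lab elt q.
Proof.
move=> Hp pq; have spq := sink_scc Hp pq; split.
  case/connectP: pq => s ps ->; case: Hp => Hp _.
  elim/last_ind: s ps => [|s b IH] //.
  by rewrite rcons_path last_rcons => /andP[_ /and4P[]].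
move=> a b sqa eab; have spb := proj2 Hp _ _ (scc_trans spq sqa) eab.
by apply: scc_trans _ spb; case/andP: spq => ? ?; exact/andP.
Qed.

Lemma reached_by_all_sink (p : V * {set U}) :
  dec_node elt p -> (forall q, dec_node elt q -> connect dec q p) -> in_sink e lab elt p.
Proof.
move=> Hp Hall; split => // a b /andP[pa ap] eab; apply/andP; split.
  exact: connect_trans pa (connect1 eab).
by apply: Hall; case/and4P: eab.
Qed.

End DecoratedWalks.

Section Shortening.
Variables (V U : finType) (e : rel V) (elt : V -> U).

Lemma simple_path_size (a : V) (p : seq V) : uniq (a :: p) -> size p < #|V|.
Proof. by move=> up; have := max_card (mem (a :: p)); rewrite (card_uniqP up). Qed.

Lemma split_last_fresh (t : seq V) : t != [::] ->
  exists ta w tb, [/\ t = ta ++ w :: tb, ~~ has (fun v => elt v == elt w) tb &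
     forall u, u \in ta -> has (fun v => elt v == elt u) (w :: tb)].
Proof.
elim: t => [|u r IH] // _.
case H: (has (fun v => elt v == elt u) r); last by exists [::], u, r; rewrite H.
have rn : r != [::] by case: r H {IH}.
have [ta [w [tb [Er Hw Hta]]]] := IH rn.
exists (u :: ta), w, tb; split => //; first by rewrite Er.
move=> u'; rewrite in_cons => /orP[/eqP->|]; last exact: Hta.
by move: H; rewrite Er has_cat => /orP[/hasP[y yta /eqP <-]|//]; exact: Hta.
Qed.

Lemma elts_proper (ta tb : seq V) (w : V) :
  ~~ has (fun v => elt v == elt w) tb ->
  #|[set elt u | u in tb]| < #|[set elt u | u in ta ++ w :: tb]|.
Proof.
move=> Hw; apply: proper_card; apply/properP; split.
  apply/subsetP => y /imsetP[u ub ->]; apply/imsetP; exists u => //.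
  by rewrite mem_cat in_cons ub !orbT.
exists (elt w); first by apply/imsetP; exists w; rewrite // mem_cat mem_head orbT.
by apply/imsetP => -[u ub eu]; move/hasP: Hw; apply; exists u; rewrite // -eu.
Qed.

(* Every walk can be shortened, keeping its endpoints and its last references,
   to at most n steps per element it refers to: after the split above the
   prefix is replaced by a simple path and the suffix is shortened recursively. *)
Lemma shorten_walk (a : V) (t : seq V) :
  path e a t -> exists t', [/\ path e a t', last a t' = last a t,
    (forall x, last_ref elt t' x = last_ref elt t x) &
    size t' <= #|V| * #|[set elt u | u in t]|].
Proof.
elim: {t}(size t).+1 {-2}t (ltnSn (size t)) a => // N IH t Hs a pt.
have [->|tn] := eqVneq t [::]; first by exists [::].
have [ta [w [tb [Et Hw Hta]]]] := split_last_fresh tn.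
move: pt; rewrite Et cat_path /= => /and3P[pta ew ptb].
have [|tb' [ptb' ltb' rtb' sztb']] := IH tb _ w ptb.
  by move: Hs; rewrite Et size_cat /=; lia.
move: ew; case: (shortenP pta) => p' pp' up' sp' ew.
have unmet s x : {subset s <= ta} -> last_ref elt (w :: tb) x = None ->
    last_ref elt s x = None.
  move=> ss Hn; case E: (last_ref elt s x) => [y|] //.
  case/andP: (last_ref_mem E) => ys /eqP ey.
  by move: (Hta y (ss _ ys)); rewrite ey -last_refP Hn.
exists (p' ++ w :: tb'); split.
- by rewrite cat_path /= pp' ew ptb'.
- by rewrite !last_cat /= ltb'.
- move=> x; rewrite !last_ref_cat !last_ref_cons rtb'.
  have := unmet _ x sp'; have := unmet _ x (fun u h => h); rewrite last_ref_cons.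
  case: (last_ref elt tb x) => //; case: (elt w == x) => // -> // -> //.
- have szp := simple_path_size up'; have cS := elts_proper ta Hw.
  have := leq_mul (leqnn #|V|) cS.
  move: sztb' szp; rewrite size_cat /=; move: #|_| #|_| (size p') (size tb') => n1 n2.
  by rewrite mulnS; lia.
Qed.

End Shortening.

Section Certificates.
Variables (V U : finType) (e : rel V) (lab : V -> bool) (elt : V -> U).

(* A certifying walk for (v, X) with its starting node [v] left out. *)
Definition cert_tail (v : V) (X : {set U}) (t : seq V) : Prop :=
  [/\ path e v t, last v t = v, covers elt t & decides lab elt t X].

(* Adding back the start gives a certifying walk in the sense of the paper; the
   start is revisited at the end, so the last references are unchanged. *)
Lemma cert_tail_certifying (v : V) (X : {set U}) (t : seq V) :
  cert_tail v X t -> certifying e lab elt v X (v :: t).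
Proof.
case=> pt lt cov decX.
have vt : v \in t.
  by case: t {pt decX} lt cov => [_ /(_ _ (elt_univV elt v))|w t /= lt _] //; rewrite -lt mem_last.
split; first by rewrite /walk eqxx pt lt eqxx.
- by move=> x /cov /= ->; rewrite orbT.
- by move=> x Hx; rewrite last_ref_cons_mem //; exact: decX.
Qed.

Lemma short_cert_tail (v : V) (X : {set U}) (t : seq V) :
  cert_tail v X t -> exists t', cert_tail v X t' /\ size t' <= #|V| ^ 2.
Proof.
case=> pt lt cov decX; have [t' [pt' lt' rt' sz]] := shorten_walk elt pt.
exists t'; split; first split => //.
- by rewrite lt' lt.
- by move=> x Hx; rewrite -last_refP rt' last_refP cov.
- by move=> x Hx; rewrite rt'; exact: decX.
apply: leq_trans sz _; rewrite expnS expn1 leq_mul2l.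
by rewrite (leq_trans (leq_imset_card _ _) (max_card _)) orbT.
Qed.

Lemma spanning_walk : (forall u w, connect e u w) ->
  forall (l : seq V) (a : V), exists t, [/\ path e a t, last a t = a & {subset l <= a :: t}].
Proof.
move=> Hc; elim=> [|u l IH] a; first by exists [::].
have [t [pt lt st]] := IH a.
have /connectP[p1 pp1 E1] := Hc a u; have /connectP[p2 pp2 E2] := Hc u a.
exists (p1 ++ p2 ++ t); split.
- by rewrite !cat_path pp1 -E1 pp2 -E2 pt.
- by rewrite !last_cat -E1 -E2 lt.
- move=> y; rewrite in_cons => /orP[/eqP->|/st]; rewrite !in_cons !mem_cat.
    by have := mem_last a p1; rewrite -E1 in_cons => /orP[->|->]; rewrite ?orbT.
  by case/orP=> ->; rewrite ?orbT.
Qed.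

(* An event graph has at least two vertices: the element of [v] is both
   inserted and deleted, hence referred to by two vertices of distinct labels. *)
Lemma event_graph_other (v : V) : event_graph e lab elt -> exists w, w != v.
Proof.
case=> _ _ _ /(_ _ (elt_univV elt v)) [[w1 [_ l1]] [w2 [_ l2]]].
by have [<-|] := eqVneq w1 v; [exists w2; apply: contraNneq l2 => ->|exists w1].
Qed.

(* Part (a), existence: a node of the sink component has a certificate.  Walk
   around the whole graph, then come back to (v, X) inside the component. *)
Lemma sink_cert_tail (v : V) (X : {set U}) :
  event_graph e lab elt -> in_sink e lab elt (v, X) -> exists t, cert_tail v X t.
Proof.
move=> Hg Hs; have [_ _ Hc _] := Hg; have [w wv] := event_graph_other v Hg.
have [t0 [pt0 lt0 st0]] := spanning_walk Hc (enum V) v.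
have cov0 : covers elt t0.
  move=> x /imsetP[u _ ->]; apply/hasP; have := st0 u (mem_enum _ u).
  rewrite in_cons => /orP[/eqP->|]; last by exists u.
  exists (last v t0); last by rewrite lt0.
  case: t0 {pt0 lt0} st0 => [/(_ w)|a t0 _ /=]; last exact: mem_last.
  by rewrite mem_enum mem_seq1 (negbTE wv) => /(_ isT).
have R0 := connect_trace lab (proj1 Hs) pt0; rewrite lt0 in R0.
have /andP[_ /connectP[s ps Es]] := sink_scc Hs R0.
have [pt1 Els] := dec_path_proj ps; rewrite Els in Es; case: Es => E1 E2.
exists (t0 ++ map fst s); split.
- by rewrite cat_path pt0 lt0 pt1.
- by rewrite last_cat lt0 -E1.
- by move=> x Hx; rewrite has_cat cov0.
- by rewrite [X in decides _ _ _ X]E2 -run_cat; apply: decides_run => x Hx; rewrite has_cat cov0.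
Qed.

(* From any vertex [u] and set [Z], a walk of length < n + |t| reaches [v] and
   replays to [X]: a simple path to [v] followed by a certificate. *)
Lemma reach_cert (u v : V) (Z X : {set U}) (t : seq V) :
  (forall u w, connect e u w) -> Z \subset univV elt -> X \subset univV elt ->
  cert_tail v X t -> exists s, [/\ path e u s, last u s = v,
                                  run lab elt Z s = X & size s < #|V| + size t].
Proof.
move=> Hc ZU XU [pt lt cov decX]; have /connectP[p0 pp0 E0] := Hc u v.
case: (shortenP pp0) E0 => p pp up _ E0.
exists (p ++ t); split.
- by rewrite cat_path pp -E0 pt.
- by rewrite last_cat -E0 lt.
- exact: run_decides.
- by rewrite size_cat ltn_add2r (simple_path_size up).
Qed.

(* Conversely to [sink_cert_tail], a node with a certificate lies in the sink
   component, since it is reachable from every node. *)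
Lemma cert_tail_sink (v : V) (X : {set U}) (t : seq V) :
  (forall u w, connect e u w) -> X \subset univV elt -> cert_tail v X t ->
  in_sink e lab elt (v, X).
Proof.
move=> Hc XU Ht; apply: reached_by_all_sink => // -[u Z] ZU.
have [s [ps ls rs _]] := reach_cert u Hc ZU XU Ht.
by have := connect_trace lab ZU ps; rewrite ls rs.
Qed.

End Certificates.

Lemma certifying_walk_bound : exists c : nat, 0 < c /\
    forall (V U : finType) (e : rel V) (lab : V -> bool) (elt : V -> U),
      event_graph e lab elt ->
      forall (v : V) (X : {set U}), in_sink e lab elt (v, X) ->
        exists W, certifying e lab elt v X W /\ size W <= c * #|V| ^ 2.
Proof.
exists 2; split => // V U e lab elt Hg v X Hs.
have [t Ht] := sink_cert_tail Hg Hs; have [t' [Ht' sz]] := short_cert_tail Ht.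
exists (v :: t'); split; first exact: cert_tail_certifying.
have : 0 < #|V| ^ 2 by rewrite expn_gt0 orbC; apply/card_gt0P; exists v.
by move: sz => /=; move: (#|V| ^ 2) => N; lia.
Qed.

Lemma sink_diameter_bound : exists c' : nat, 0 < c' /\
    forall (V U : finType) (e : rel V) (lab : V -> bool) (elt : V -> U),
      event_graph e lab elt ->
      forall p q, in_sink e lab elt p -> in_sink e lab elt q ->
        exists s, [/\ walk (dec_edge e lab elt) p q s,
                      (forall a, a \in s -> in_sink e lab elt a) &
                      size s <= c' * #|V| ^ 2].
Proof.
exists 2; split => // V U e lab elt Hg [u Z] [v X] Hp Hq.
have [t Ht] := sink_cert_tail Hg Hq; have [t' [Ht' sz]] := short_cert_tail Ht.
have [_ _ Hc _] := Hg.
have [s [ps ls rs szs]] := reach_cert u Hc (proj1 Hp) (proj1 Hq) Ht'.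
have dps := dec_trace_path lab (proj1 Hp) ps.
exists ((u, Z) :: dec_trace lab elt Z s); split.
- by rewrite /walk eqxx dps dec_trace_last ls rs eqxx.
- by move=> a Ha; apply: sink_closed Hp _; exact: path_connect dps _ Ha.
- rewrite /= size_dec_trace; have : #|V| <= #|V| ^ 2.
    by rewrite expnS expn1 leq_pmulr //; apply/card_gt0P; exists v.
  by move: szs sz; move: (#|V| ^ 2) #|V| (size s) => N n; lia.
Qed.

Section PathExample.
Variable m : nat.
Local Notation V := 'I_(2 * m).+1.
Local Notation E := (@pathP_edge m).
Local Notation lab := (@pathP_lab m).
Local Notation elt := (@pathP_elt m).
Local Notation mid := (pathP_mid m).

Lemma elt_val (u : V) :
  (elt u : nat) = if u < m then m - u else if u == m :> nat then m else u - m.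
Proof.
rewrite /pathP_elt /= inordK //; have := ltn_ord u.
by case: ifP => H1; last case: eqP => H2; lia.
Qed.

Lemma mid_val : (mid : nat) = m.
Proof. by rewrite /pathP_mid /= inordK //; lia. Qed.

Lemma elt_mid : (elt mid : nat) = m.
Proof. by rewrite elt_val mid_val ltnn eqxx. Qed.

Lemma edgeP (u w : V) : E u w = (w == u + 1 :> nat) || (u == w + 1 :> nat).
Proof. by rewrite /pathP_edge !addn1 ![_.+1 == _]eq_sym. Qed.

Definition side_pos (b : bool) (k : nat) : nat := if b then m - k else m + k.

Lemma side_posP (u : V) (b : bool) (k : nat) :
  0 < k <= m -> (u : nat) = side_pos b k -> (elt u : nat) = k /\ lab u = b.
Proof.
rewrite /side_pos /pathP_lab elt_val => km; case: b => ->.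
  by case: ifP => h; last case: eqP => h'; split; lia.
by case: ifP => h; last case: eqP => h'; split; lia.
Qed.

Lemma side_posE (u : V) (k : nat) :
  0 < k < m -> (elt u : nat) = k -> (u : nat) = side_pos (lab u) k.
Proof.
rewrite elt_val /side_pos /pathP_lab => km; have := ltn_ord u.
by case: ifP => h1; last case: eqP => h2; rewrite /=; lia.
Qed.

Lemma univV_val (x : 'I_m.+1) : 0 < m -> (x \in univV elt) = (0 < x).
Proof.
move=> m0; apply/imsetP/idP => [[u _ ->]|x0].
  by rewrite elt_val; have := ltn_ord u; case: ifP => H1; last case: eqP => H2; lia.
have xm := ltn_ord x; have mxV : m + x < (2 * m).+1 by lia.
exists (Ordinal mxV) => //; apply: val_inj.
have [|//|ex _] := @side_posP (Ordinal mxV) false x; first lia.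
by rewrite /= ex.
Qed.

Lemma segment (a b : V) : exists l, [/\ path E a l, last a l = b,
  size l = (a - b) + (b - a) & all (fun u : V => (a < u <= b) || (b <= u < a)) l].
Proof.
have [d dab] : {d | (a - b) + (b - a) = d} by exists ((a - b) + (b - a)).
elim: d a dab => [|d IH] a dab.
  by exists [::]; split => //; apply: val_inj => /=; lia.
have ab : b != a by apply/eqP => ba; rewrite ba !subnn in dab.
set c := if a < b then a.+1 else a.-1.
have cV : c < (2 * m).+1 by have := ltn_ord a; have := ltn_ord b; rewrite /c; case: ifP; lia.
have [l [pl ll sl al]] := IH (Ordinal cV) ltac:(rewrite /= /c; case: ifP; lia).
exists (Ordinal cV :: l); split => //=.
- by rewrite pl andbT edgeP /= /c; case: ifP; lia.
- by rewrite sl /= /c; case: ifP; lia.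
- rewrite /c in al *; apply/andP; split; first by case: ifP; lia.
  by apply: sub_all al => u /=; case: ifP; lia.
Qed.

Lemma path_connected (u w : V) : connect E u w.
Proof. by have [l [pl ll _ _]] := segment u w; apply/connectP; exists l. Qed.

Lemma path_hits (a : V) (t : seq V) (c : nat) : path E a t ->
  (a <= c <= last a t) || (last a t <= c <= a) -> exists2 u, u \in a :: t & u = c :> nat.
Proof.
elim: t a => [|w t IH] a /=; first by move=> _ H; exists a; rewrite ?mem_head //; lia.
rewrite edgeP => /andP[ew pt] H.
have [->|ne] := eqVneq c a; first by exists a; rewrite ?mem_head.
have [|u ut uc] := IH w pt; first by rewrite /= in ew ne H *; lia.
by exists u; rewrite // in_cons ut orbT.
Qed.

Lemma path_dist (a : V) (t : seq V) : path E a t ->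
  (last a t <= a + size t) && (a <= last a t + size t).
Proof.
elim: t a => [|w t IH] a /=; first by rewrite !addn0 !leqnn.
by rewrite edgeP => /andP[ew /IH]; rewrite /= in ew *; lia.
Qed.

Lemma elt_band (u : V) (j : nat) : m - j <= u <= m + j -> (elt u <= j) || (elt u == m :> nat).
Proof. by rewrite elt_val; case: ifP => h1; last case: eqP => h2; lia. Qed.

Section Sweep.
Variable T : {set 'I_m.+1}.

(* From any vertex within distance j + 1 of the middle, a walk staying within
   distance j reaches the middle and gives each element k <= j its last
   reference on the side prescribed by T: visit the vertex at distance j on
   the correct side, then recurse. *)
Lemma sweep (j : nat) : j < m -> forall p : V, m - j.+1 <= p <= m + j.+1 ->
  exists t, [/\ path E p t, last p t = mid, all (fun u : V => m - j <= u <= m + j) t &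
    forall k, 0 < k <= j ->
      exists2 w, last_ref elt (p :: t) (inord k) = Some w & lab w = (inord k \in T)].
Proof.
elim: j => [|j IH] jm p hp.
  have [l [pl ll _ al]] := segment p mid; exists l; split => //; last by lia.
  by apply: sub_all al => u; rewrite mid_val; lia.
set b := (inord j.+1 : 'I_m.+1) \in T.
have qV : side_pos b j.+1 < (2 * m).+1 by rewrite /side_pos; case: ifP; lia.
set q := Ordinal qV; have [eltq labq] := @side_posP q b j.+1 ltac:(lia) erefl.
have [l [pl ll _ al]] := segment p q.
have [|t [pt lt at_ rt]] := IH ltac:(lia) q; first by rewrite /= /side_pos; case: ifP; lia.
have split_q : p :: l ++ t = belast p l ++ q :: t by rewrite -cat_cons lastI cat_rcons ll.
exists (l ++ t); split.
- by rewrite cat_path pl ll pt.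
- by rewrite last_cat ll lt.
- rewrite all_cat; apply/andP; split; last by apply: sub_all at_ => u; lia.
  by apply: sub_all al => u /=; rewrite /side_pos; case: ifP; lia.
move=> k /andP[k0]; rewrite leq_eqVlt ltnS split_q => /orP[/eqP ->|kj].
  have eq_q : elt q = inord j.+1 by apply: val_inj; rewrite /= inordK ?eltq //; lia.
  exists q; rewrite // last_ref_suffix /= ?eq_q ?eqxx // last_ref_cons eq_q eqxx.
  suff -> : last_ref elt t (inord j.+1) = None by [].
  apply/eqP; rewrite -[_ == _]negbK last_refP; apply/hasP => -[u ut /eqP/(congr1 val)].
  by have := elt_band (allP at_ u ut); rewrite /= inordK //; lia.
have [w wq lw] := rt k ltac:(lia); exists w => //.
by rewrite last_ref_suffix // -last_refP wq.
Qed.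

Hypothesis m2 : 2 <= m.
Hypothesis T_bound : forall x, x \in T -> 0 < x < m.

Lemma sweep_cert : exists t, cert_tail E lab elt mid T t.
Proof.
have [|t [pt lt _ rt]] := @sweep m.-1 ltac:(lia) mid; first by rewrite mid_val; lia.
have tn : t != [::].
  apply/eqP => t0; have [w] := rt 1 ltac:(lia); rewrite t0.
  move=> /last_ref_mem; rewrite mem_seq1 => /andP[/eqP -> /eqP/(congr1 val)].
  by rewrite /= elt_mid inordK //; lia.
have midt : mid \in t by rewrite -{1}lt; case: t tn {pt lt rt} => // a t _ /=; exact: mem_last.
have [lastm lab_mid] : last_ref elt t (elt mid) = Some mid /\ lab mid = false.
  by rewrite -{1 2}lt last_ref_last // lt /pathP_lab mid_val ltnn.
have univ_pos (x : 'I_m.+1) : (x \in univV elt) = (0 < x) by apply: univV_val; lia.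
have small (x : 'I_m.+1) : 0 < x < m -> exists2 w, last_ref elt t x = Some w & lab w = (x \in T).
  move=> xm; have [w] := rt x ltac:(lia); rewrite last_ref_cons_mem // inord_val.
  by exists w.
have elt_midE (x : 'I_m.+1) : ~~ (x < m) -> 0 < x -> x = elt mid.
  by move=> xm x0; apply: val_inj; rewrite /= elt_mid; have := ltn_ord x; lia.
exists t; split => //.
- move=> x; rewrite univ_pos => x0; have [xm|xm] := boolP (x < m).
    by have [w wt _] := small x ltac:(lia); rewrite -last_refP wt.
  by rewrite (elt_midE x xm x0) -last_refP lastm.
- move=> x; rewrite univ_pos => x0; have [xm|xm] := boolP (x < m).
    have [w wt lw] := small x ltac:(lia); rewrite wt.
    by split => [xT|[_ [[<-]]]]; [exists w; rewrite lw|rewrite lw].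
  rewrite (elt_midE x xm x0) lastm; split => [/T_bound|[_ [[<-]]]]; last by rewrite lab_mid.
  by rewrite elt_mid; lia.
Qed.

Lemma pathP_sink : in_sink E lab elt (mid, T).
Proof.
have [t Ht] := sweep_cert.
apply: cert_tail_sink Ht; first exact: path_connected.
by apply/subsetP => x /T_bound; rewrite univV_val; lia.
Qed.

End Sweep.

(* The last reference of [W] to k has the label demanded by Y: an insertion
   (on the left) for odd k, a deletion (on the right) for even k. *)
Definition parity_ref (W : seq V) (k : nat) : Prop :=
  exists2 w, last_ref elt W (inord k) = Some w & lab w = odd k.

Lemma last_ref_pos (W : seq V) (k : nat) (w : V) : 0 < k < m ->
  last_ref elt W (inord k) = Some w -> (w : nat) = side_pos (lab w) k.
Proof.
move=> km /last_ref_mem /andP[_ /eqP/(congr1 val)]; rewrite /= inordK; last by lia.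
exact: side_posE.
Qed.

Lemma walk_to_mid_meets (u : V) (s : seq V) (b : bool) (j k : nat) :
  path E u s -> last u s = mid -> (u : nat) = side_pos b j -> j <= m ->
  0 < k <= j -> has (fun q => elt q == inord k) (u :: s).
Proof.
move=> pu lu uj jm kj.
have [|q qs qk] := @path_hits u s (side_pos b k) pu.
  by rewrite lu mid_val uj /side_pos; case: (b); lia.
have [eltq _] := @side_posP q b k ltac:(lia) qk.
by apply/hasP; exists q => //; apply/eqP/val_inj; rewrite /= eltq inordK //; lia.
Qed.

Lemma path_split (T : eqType) (r : rel T) (a u : T) (t W1 W2 : seq T) :
  path r a t -> a :: t = W1 ++ u :: W2 -> path r u W2 /\ last u W2 = last a t.
Proof.
case: W1 => [|b W1] /= pt [Ea Et]; first by subst.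
by move: pt; rewrite Et cat_path last_cat /= => /andP[_ /andP[_ ->]].
Qed.

Lemma cut_at_last_ref (a : V) (t : seq V) (j : nat) : 0 < j < m ->
  path E a t -> last a t = mid -> (forall k, 0 < k <= j -> parity_ref (a :: t) k) ->
  exists W1 u W2, [/\ a :: t = W1 ++ u :: W2, path E u W2, last u W2 = mid,
    last_ref elt (u :: W2) (inord j) = Some u & forall k, 0 < k <= j -> parity_ref (u :: W2) k].
Proof.
move=> jm pt lt parity; have [u lu labu] := parity j ltac:(lia).
have [W1 [W2 [EW nW2]]] := split_last_ref lu.
have [pu lu2] := path_split pt EW; rewrite lt in lu2.
have uj := last_ref_pos jm lu; rewrite labu in uj.
have same k : 0 < k <= j -> last_ref elt (a :: t) (inord k) = last_ref elt (u :: W2) (inord k).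
  by move=> kj; rewrite EW last_ref_suffix //; apply: (walk_to_mid_meets pu lu2 uj) kj; lia.
exists W1, u, W2; split => //.
  by rewrite -same ?lu //; lia.
by move=> k kj; have := parity k kj; rewrite /parity_ref same.
Qed.

(* The zigzag: if the walk starts at the last reference to j and the last
   references to 1, ..., j alternate sides, consecutive ones are 2k - 1 apart,
   so the walk has length at least 1 + 3 + ... + (2j - 1) = j^2. *)
Lemma zigzag (j : nat) : 0 < j < m -> forall (w : V) (s : seq V),
  path E w s -> last w s = mid -> last_ref elt (w :: s) (inord j) = Some w ->
  (forall k, 0 < k <= j -> parity_ref (w :: s) k) -> j ^ 2 <= size (w :: s).
Proof.
elim: j => [|j IH] // jm w s pw lw lref parity; have [->|j0] := posnP j; first by [].
have [w' lw' labw] := parity j.+1 ltac:(lia); rewrite lref in lw'; case: lw' => ww.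
rewrite -ww in labw.
have wj := last_ref_pos jm lref; rewrite labw in wj.
have [W1 [u [W2 [EW pu lu lref' parity']]]] := cut_at_last_ref (j := j) ltac:(lia) pw lw
  (fun k kj => parity k ltac:(lia)).
have [u' lu' ulab] := parity' j ltac:(lia); rewrite lref' in lu'; case: lu' => uu; rewrite -uu in ulab.
have uj := last_ref_pos (k := j) ltac:(lia) lref'; rewrite ulab in uj.
have sq := IH ltac:(lia) u W2 pu lu lref' parity'.
case: W1 EW => [[wu _]|a W1 [aw Es]].
  by move: wj uj; rewrite wu /side_pos oddS; case: (odd j) => /=; lia.
have : path E w (rcons W1 u) by move: pw; rewrite Es cat_path rcons_path /= => /and3P[-> ->].
move=> /path_dist; rewrite last_rcons size_rcons Es /= size_cat /= wj uj /side_pos oddS.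
move: sq; rewrite /= -[j.+1]addn1 sqrnD exp1n muln1.
by case: (odd j) => /=; move: (j ^ 2) => J; lia.
Qed.

Lemma Y_odd (k : nat) : 0 < k < m -> ((inord k : 'I_m.+1) \in pathP_Y m) = odd k.
Proof.
move=> km; apply/imsetP/idP => [[[K kl] _ /(congr1 val)]|ok].
  have kl' : K < m %/ 2 by rewrite divn2.
  by rewrite /= !inordK; lia.
have kl : k./2 < m./2 by rewrite -!divn2; lia.
by exists (Ordinal kl) => //; apply: val_inj; rewrite /= !inordK -?divn2; lia.
Qed.

Lemma Y_bound (x : 'I_m.+1) : x \in pathP_Y m -> 0 < x < m.
Proof.
case/imsetP => -[K kl] _ ->; have kl' : K < m %/ 2 by rewrite divn2.
by rewrite /= inordK; lia.
Qed.

Hypothesis m2 : 2 <= m.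

Lemma cert_lower_bound (W : seq V) :
  certifying E lab elt mid (pathP_Y m) W -> (m - 1) ^ 2 <= size W.
Proof.
case: W => [[]|a t [/and3P[/eqP -> pt /eqP lt] cov decX]] //.
have parity k : 0 < k <= m - 1 -> parity_ref (mid :: t) k.
  move=> km; have kU : (inord k : 'I_m.+1) \in univV elt by rewrite univV_val ?inordK; lia.
  move: (cov _ kU); rewrite -last_refP; case Ek: (last_ref _ _ _) => [u|] // _.
  exists u => //; have := decX _ kU; rewrite Y_odd; last by lia.
  rewrite Ek => -[toY ofY]; apply/idP/idP => [lu|ok]; first by apply: ofY; exists u.
  by have [w [[<-]]] := toY ok.
have [W1 [u [W2 [EW pu lu lref P']]]] := cut_at_last_ref (j := m - 1) ltac:(lia) pt lt parity.
have := zigzag (j := m - 1) ltac:(lia) pu lu lref P'.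
by move/leq_trans; apply; rewrite EW size_cat leq_addl.
Qed.

Lemma sweep_right : exists R, [/\ path E mid R, last mid R = mid, size R = 2 * m,
  all (fun w => ~~ lab w) R & covers elt R].
Proof.
have [l1 [p1 ll1 s1 a1]] := segment mid ord_max.
have [l2 [p2 ll2 s2 a2]] := segment ord_max mid.
exists (l1 ++ l2); split.
- by rewrite cat_path p1 ll1 p2.
- by rewrite last_cat ll1 ll2.
- by rewrite size_cat s1 s2 mid_val /=; lia.
- rewrite all_cat; apply/andP; split; [apply: sub_all a1|apply: sub_all a2];
    by move=> u; rewrite /pathP_lab mid_val /= -leqNgt; lia.
move=> x; rewrite univV_val; last by lia.
move=> x0; have xm := ltn_ord x; rewrite has_cat; apply/orP; left.
have [|q] := @path_hits mid l1 (side_pos false x) p1; first by rewrite ll1 mid_val /side_pos /=; lia.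
rewrite in_cons => /orP[/eqP ->|ql1 qx]; first by rewrite mid_val /side_pos; lia.
have [eltq _] := @side_posP q false x ltac:(lia) qx.
by apply/hasP; exists q => //; apply/eqP/val_inj.
Qed.

(* A walk of dec(P) from (mid, {}) to (mid, Y), preceded by the deleting sweep,
   projects to a certifying walk for (mid, Y); hence it has length at least
   (m - 1)^2 - 2m. *)
Lemma dec_walk_lower_bound (s : seq (V * {set 'I_m.+1})) :
  walk (dec_edge E lab elt) (mid, set0) (mid, pathP_Y m) s -> (m - 1) ^ 2 <= 2 * m + size s.
Proof.
case: s => [|p0 s] //= /and3P[/eqP -> ps /eqP ls].
have [pt Els] := dec_path_proj ps; rewrite Els in ls; case: ls => lt runY.
have [R [pR lR sR dR cR]] := sweep_right.
have cert : cert_tail E lab elt mid (pathP_Y m) (R ++ map fst s).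
  split.
  - by rewrite cat_path pR lR pt.
  - by rewrite last_cat lR lt.
  - by move=> x Hx; rewrite has_cat cR.
  - rewrite -runY -(@run_deletions _ _ lab elt R dR) -run_cat.
    by apply: decides_run => x Hx; rewrite has_cat cR.
have := cert_lower_bound (cert_tail_certifying cert).
by rewrite /= size_cat size_map sR; lia.
Qed.

End PathExample.

Lemma quadratic_in_n (m S : nat) :
  2 <= m -> 0 < S -> (m - 1) ^ 2 <= 2 * m + S -> (2 * m + 1) ^ 2 <= 121 * S.
Proof.
move=> m2 S0 lb; have [m4|m5] := leqP m 4.
  have : (2 * m + 1) ^ 2 <= 81 by nia.
  nia.
nia.
Qed.

Theorem mainTheorem5 :
  (* (a) certifying walks of length O(n^2) *)
  (exists c : nat, 0 < c /\
    forall (V U : finType) (e : rel V) (lab : V -> bool) (elt : V -> U),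
      event_graph e lab elt ->
      forall (v : V) (X : {set U}), in_sink e lab elt (v, X) ->
        exists W, certifying e lab elt v X W /\ size W <= c * #|V| ^ 2)
  /\
  (* (a) diameter of the sink component is O(n^2) *)
  (exists c' : nat, 0 < c' /\
    forall (V U : finType) (e : rel V) (lab : V -> bool) (elt : V -> U),
      event_graph e lab elt ->
      forall p q, in_sink e lab elt p -> in_sink e lab elt q ->
        exists s, [/\ walk (dec_edge e lab elt) p q s,
                      (forall a, a \in s -> in_sink e lab elt a) &
                      size s <= c' * #|V| ^ 2])
  /\
  (* (b) tightness: both lower bounds Omega(n^2), n = 2m+1 *)
  (exists d : nat, 0 < d /\
    forall m : nat, 2 <= m ->
      [/\ in_sink (@pathP_edge m) (@pathP_lab m) (@pathP_elt m) (pathP_mid m, set0),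
          in_sink (@pathP_edge m) (@pathP_lab m) (@pathP_elt m) (pathP_mid m, pathP_Y m),
          (forall W, certifying (@pathP_edge m) (@pathP_lab m) (@pathP_elt m)
                                (pathP_mid m) (pathP_Y m) W ->
                     (2 * m + 1) ^ 2 <= d * size W) &
          (forall s, walk (dec_edge (@pathP_edge m) (@pathP_lab m) (@pathP_elt m))
                          (pathP_mid m, set0) (pathP_mid m, pathP_Y m) s ->
                     (2 * m + 1) ^ 2 <= d * size s)]).
Proof.
split; first exact: certifying_walk_bound.
split; first exact: sink_diameter_bound.
exists 121; split => // m m2; split.
- by apply: pathP_sink => // x; rewrite inE.
- exact: pathP_sink (@Y_bound m).
- move=> W HW; apply: quadratic_in_n => //; first by case: W HW => [[]|].
  by apply: leq_trans (cert_lower_bound m2 HW) _; rewrite leq_addl.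
- move=> s Hs; apply: quadratic_in_n => //; last exact: dec_walk_lower_bound Hs.
  by case: s Hs.
Qed.
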